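(* Let $\rho\in[0,1]$ and define $\gamma_k(1)$, $\Gamma_k(1,\rho)$ as in the context. (a) If $\alpha_k=2/(k+1)$, $k=1,2,\ldots$, then $\alpha_k\in(0,1]$, $\alpha_1=1$, and $\gamma_k(1)\|\Gamma_k(1,\rho)\|_{\frac{2}{1-\rho}}\le ck^{-\frac{1+3\rho}{2}}$ for all $k\ge1$ with $c=2^{1+\rho}3^{-\frac{1-\rho}{2}}$. (b) If $\alpha_k$ are defined recursively by $\alpha_1=\gamma_1=1$, $\gamma_k=\alpha_k^2=(1-\alpha_k)\gamma_{k-1}$ for $k\ge2$ (with $\alpha_k>0$), then $\alpha_k\in(0,1]$ for all $k\ge1$, and the condition of (a) ($\alpha_1=1$ and $\gamma_k(1)\|\Gamma_k(1,\rho)\|_{\frac{2}{1-\rho}}\le ck^{-\frac{1+3\rho}{2}}$ for all $k$) holds with $c=\frac{4}{3^{(1-\rho)/2}}$.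
   Context: For $\alpha_k\in(0,1]$: $\gamma_1(1)=1$, $\gamma_k(1)=(1-\alpha_k)\gamma_{k-1}(1)$ for $k\ge2$; $\Gamma_k(1,\rho)=(\gamma_1(1)^{-1}\alpha_1^{1+\rho},\ldots,\gamma_k(1)^{-1}\alpha_k^{1+\rho})\in\mathbb{R}^k$; $\|\cdot\|_p$ is the $\ell_p$ norm, with $\frac{2}{1-\rho}=\infty$ when $\rho=1$. *)

From HB Require Import structures.
From mathcomp Require Import all_boot all_order all_algebra.
From mathcomp Require Import all_classical all_reals all_analysis.
Set Implicit Arguments. Unset Strict Implicit. Unset Printing Implicit Defensive.
Import Order.TTheory GRing.Theory Num.Theory.
Local Open Scope ring_scope.

Section Defs.
Variable R : realType.

(* gamma_k(1): gamma_1 = 1, gamma_k = (1 - alpha_k) gamma_{k-1} for k >= 2.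
   Indices start at 1; the value at index 0 is an unused filler (= 1). *)
Fixpoint gam (alpha : nat -> R) (k : nat) : R :=
  match k with
  | 0 => 1
  | 1 => 1
  | k'.+1 => (1 - alpha k) * gam alpha k'
  end.

Definition Gam_entry (alpha : nat -> R) (rho : R) (i : nat) : R :=
  (gam alpha i)^-1 * (alpha i `^ (1 + rho)).

Definition lp_norm (p : \bar R) (k : nat) (x : nat -> R) : R :=
  match p with
  | EFin r => (\sum_(1 <= i < k.+1) `|x i| `^ r) `^ r^-1
  | +oo%E => \big[Num.max/0]_(1 <= i < k.+1) `|x i|
  | -oo%E => 0
  end.

Definition lp_exponent (rho : R) : \bar R :=
  if rho == 1 then +oo%E else (2 / (1 - rho))%:E.

Definition Gam_norm (alpha : nat -> R) (rho : R) (k : nat) : R :=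
  lp_norm (lp_exponent rho) k (Gam_entry alpha rho).

End Defs.

From HB Require Import structures.
From mathcomp Require Import all_boot all_order all_algebra.
From mathcomp Require Import all_classical all_reals all_analysis.
From mathcomp Require Import ring lra.
Import Order.TTheory GRing.Theory Num.Theory.
Set Implicit Arguments. Unset Strict Implicit. Unset Printing Implicit Defensive.
Local Open Scope ring_scope.

(* Both step-size rules give gamma_k <= c / (k (k+1)) and entries of Gamma_k bounded by
   C i^(1-rho), with (c, C) = (2, 2^rho) for alpha_k = 2/(k+1) and (4, 1) for the
   recursive rule.  Such entry bounds give ||Gamma_k||_(2/(1-rho)) <= C S_k^s with
   S_k = sum_(i<=k) i^2 = k(k+1)(2k+1)/6 and s = (1-rho)/2, and for s in [0, 1/2] one has
   (3 S_k)^s <= k^(3s-1) (k+1); multiplying out yields c C 3^(-s) k^(3s-2), which is the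
   claimed rate.  For the recursive rule, t_k = 1/alpha_k satisfies t_k^2 - t_k = t_(k-1)^2,
   so t_(k-1) + 1/2 <= t_k <= t_(k-1) + 1 and hence (k+1)/2 <= t_k <= k. *)

Lemma sqr_sub_eq_sqr_bounds (F : realFieldType) (t u : F) :
  0 < u -> 0 < t -> t ^+ 2 - t = u ^+ 2 -> u + 1 / 2 <= t <= u + 1.
Proof.
move=> u0 t0 e; have t1 : 1 < t by nra.
by apply/andP; split; rewrite leNgt; apply/negP => h; nra.
Qed.

Section RateBounds.
Variable R : realType.

Lemma sum_sqr_nat (k : nat) :
  \sum_(1 <= i < k.+1) (i%:R : R) ^+ 2 = k%:R * (k%:R + 1) * (2 * k%:R + 1) / 6.
Proof.
elim: k => [|k IH]; first by rewrite big_geq //; field.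
by rewrite big_nat_recr //= IH -[k.+1]addn1 natrD; field.
Qed.

Lemma lp_norm_le_sum_sqr (rho C : R) (k : nat) (x : nat -> R) :
  0 <= rho -> rho <= 1 -> 0 <= C ->
  (forall i, (1 <= i <= k)%N -> 0 <= x i <= C * i%:R `^ (1 - rho)) ->
  lp_norm (lp_exponent rho) k x <=
  C * (\sum_(1 <= i < k.+1) (i%:R : R) ^+ 2) `^ ((1 - rho) / 2).
Proof.
move=> rho0 rho1 C0 hx; rewrite /lp_exponent.
have [rho_eq1|rho_neq1] := eqVneq rho 1.
  subst rho; rewrite /= subrr mul0r powRr0 mulr1 big_seq.
  apply: (big_ind (fun y => y <= C)) => // [y z yC zC|i].
    by rewrite ge_max yC zC.
  rewrite mem_index_iota => /hx /andP[xi0 xiC].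
  by rewrite ger0_norm // (le_trans xiC) // subrr powRr0 mulr1.
set r := 2 / (1 - rho).
have r_gt0 : 0 < r by rewrite divr_gt0 // subr_gt0 lt_neqAle rho_neq1.
have s_ge0 : 0 <= (1 - rho) / 2 by rewrite divr_ge0 // subr_ge0.
have rs : r * ((1 - rho) / 2) = 1 by rewrite /r; field; rewrite subr_eq0 eq_sym.
rewrite /= invf_div.
have sum_le : \sum_(1 <= i < k.+1) `|x i| `^ r <=
              C `^ r * \sum_(1 <= i < k.+1) (i%:R : R) ^+ 2.
  rewrite mulr_sumr; apply: ler_sum_nat => i /andP[i1 ik].
  have /andP[xi0 xiC] := hx i ltac:(by rewrite i1 -ltnS ik).
  rewrite ger0_norm // (le_trans (ge0_ler_powR (ltW r_gt0) _ _ xiC)) ?nnegrE //.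
    by rewrite mulr_ge0 // powR_ge0.
  have r2 : (1 - rho) * r = 2%:R by rewrite /r; field; rewrite subr_eq0 eq_sym.
  by rewrite powRM ?powR_ge0 // -powRrM r2 powR_mulrn // mulrC.
have sqr_ge0 : 0 <= \sum_(1 <= i < k.+1) (i%:R : R) ^+ 2.
  by rewrite sumr_ge0 // => i _; rewrite exprn_ge0.
apply: (le_trans (ge0_ler_powR s_ge0 _ _ sum_le)); rewrite ?nnegrE.
- by rewrite sumr_ge0 // => i _; rewrite powR_ge0.
- by rewrite mulr_ge0 ?powR_ge0.
by rewrite powRM ?powR_ge0 // -powRrM rs powRr1.
Qed.

Lemma powR_three_sum_sqr_le (s : R) (k : nat) : (1 <= k)%N -> 0 <= s <= 1 / 2 ->
  (3 * \sum_(1 <= i < k.+1) (i%:R : R) ^+ 2) `^ s <= k%:R `^ (3 * s - 1) * (k%:R + 1).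
Proof.
move=> k1 /andP[s0 s12]; rewrite sum_sqr_nat.
have K1 : 1 <= k%:R :> R by rewrite ler1n.
set K : R := k%:R in K1 *.
(* 3 S_k = K^3 Y with Y <= Z^2, and Y^s <= Z^(2s) <= Z as 2s <= 1. *)
set Z := (K + 1) / K.
set Y := (K + 1) * (2 * K + 1) / (2 * K ^+ 2).
have Z1 : 1 <= Z by rewrite ler_pdivlMr; lra.
have Y0 : 0 <= Y by rewrite divr_ge0 //; nra.
have YZ : Y <= Z ^+ 2.
  have -> : Z ^+ 2 = 2 * (K + 1) ^+ 2 / (2 * K ^+ 2) by rewrite /Z; field; lra.
  by rewrite ler_pM2r ?invr_gt0; nra.
have -> : 3 * (K * (K + 1) * (2 * K + 1) / 6) = K `^ 3%:R * Y.
  rewrite powR_mulrn; last lra.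
  by rewrite /Y; field; lra.
rewrite powRM ?powR_ge0 // -powRrM.
have -> : K `^ (3 * s - 1) * (K + 1) = K `^ (3 * s) * Z.
  rewrite powRB ?powRr1 /Z; [by rewrite mulrA mulrAC|lra|].
  by apply/implyP => _; rewrite gt_eqF //; lra.
rewrite ler_wpM2l ?powR_ge0 //.
have Z0 : 0 <= Z by lra.
apply: (le_trans (ge0_ler_powR s0 _ _ YZ)); rewrite ?nnegrE ?exprn_ge0 //.
rewrite -powR_mulrn // -powRrM (le_trans (ler_powR Z1 (_ : _ <= 1))) ?powRr1 //; lra.
Qed.

Lemma gam_Gam_norm_le (alpha : nat -> R) (rho c C : R) (k : nat) :
  0 <= rho -> rho <= 1 -> 0 <= C -> (1 <= k)%N ->
  0 <= gam alpha k <= c / (k%:R * (k%:R + 1)) ->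
  (forall i, (1 <= i <= k)%N -> 0 <= Gam_entry alpha rho i <= C * i%:R `^ (1 - rho)) ->
  gam alpha k * Gam_norm alpha rho k <=
  c * C * 3 `^ (- ((1 - rho) / 2)) * k%:R `^ (- ((1 + 3 * rho) / 2)).
Proof.
move=> rho0 rho1 C0 k1 /andP[gam_ge0 gam_le] entry_le.
have K1 : 1 <= k%:R :> R by rewrite ler1n.
set K : R := k%:R in K1 gam_le *.
set s := (1 - rho) / 2; set S := \sum_(1 <= i < k.+1) (i%:R : R) ^+ 2.
have KK_gt0 : 0 < K * (K + 1) by nra.
have c0 : 0 <= c.
  by move: (le_trans gam_ge0 gam_le); rewrite pmulr_lge0 // invr_gt0.
have S0 : 0 <= S by rewrite sumr_ge0 // => i _; rewrite exprn_ge0.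
have three_s_gt0 : 0 < 3 `^ s by rewrite powR_gt0.
have key := @powR_three_sum_sqr_le s k k1 ltac:(rewrite /s; apply/andP; split; lra).
rewrite -/S -/K powRM // in key.
have norm_le := lp_norm_le_sum_sqr rho0 rho1 C0 entry_le.
apply: (le_trans (ler_wpM2l gam_ge0 norm_le)).
apply: (le_trans (ler_wpM2r _ gam_le)); first by rewrite mulr_ge0 ?powR_ge0.
set d := c * C * 3 `^ (- s) / (K * (K + 1)).
have d0 : 0 <= d := divr_ge0 (mulr_ge0 (mulr_ge0 c0 C0) (powR_ge0 _ _)) (ltW KK_gt0).
have -> : c / (K * (K + 1)) * (C * S `^ s) = d * (3 `^ s * S `^ s).
  by rewrite /d powRN; field; rewrite !gt_eqF //; lra.
have -> : K `^ (- ((1 + 3 * rho) / 2)) = K `^ (3 * s - 1) / K.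
  have -> : - ((1 + 3 * rho) / 2) = 3 * s - 1 - 1 by rewrite /s; field.
  by rewrite powRB ?powRr1 //; apply/implyP => _; rewrite gt_eqF //; lra.
have -> : c * C * 3 `^ (- s) * (K `^ (3 * s - 1) / K) = d * (K `^ (3 * s - 1) * (K + 1)).
  by rewrite /d; field; lra.
exact: ler_wpM2l.
Qed.

Section HarmonicStepsizes.
Variable alpha : nat -> R.
Hypothesis alphaE : forall k, (1 <= k)%N -> alpha k = 2 / (k%:R + 1).

Lemma harmonic_alpha_gt0_le1 k : (1 <= k)%N -> 0 < alpha k <= 1.
Proof.
move=> k1; have K1 : 1 <= k%:R :> R by rewrite ler1n.
by rewrite alphaE // divr_gt0 ?ler_pdivrMr /=; lra.
Qed.

Lemma gam_harmonic k : (1 <= k)%N -> gam alpha k = 2 / (k%:R * (k%:R + 1)).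
Proof.
elim: k => [//|[_ _|k IH _]]; first by rewrite /=; field.
have k0 : 0 <= k%:R :> R by rewrite ler0n.
rewrite [gam _ _]/= -/(gam alpha k.+1) IH // alphaE // !mulrS.
by field; rewrite !gt_eqF //; lra.
Qed.

Lemma Gam_entry_harmonic_le rho i : 0 <= rho -> (1 <= i)%N ->
  0 <= Gam_entry alpha rho i <= 2 `^ rho * i%:R `^ (1 - rho).
Proof.
move=> rho0 i1; have I1 : 1 <= i%:R :> R by rewrite ler1n.
rewrite /Gam_entry gam_harmonic // alphaE //.
set I : R := i%:R in I1 *; set a := 2 / (I + 1).
have a_gt0 : 0 < a by rewrite divr_gt0 //; lra.
have a_ge0 := ltW a_gt0.
rewrite powRD ?powRr1 //; last by apply/implyP => _; rewrite gt_eqF.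
have -> : (2 / (I * (I + 1)))^-1 * (a * a `^ rho) = I * a `^ rho.
  by rewrite /a; field; lra.
have -> : I * a `^ rho = I `^ (1 - rho) * (I * a) `^ rho.
  by rewrite powRM // mulrA -powRD subrK ?powRr1 ?oner_eq0 //; lra.
rewrite mulr_ge0 ?powR_ge0 //= mulrC ler_wpM2r ?powR_ge0 //.
have Ia_le2 : I * a <= 2 by rewrite /a mulrA ler_pdivrMr; lra.
by rewrite ge0_ler_powR ?nnegrE // mulr_ge0 //; lra.
Qed.

End HarmonicStepsizes.

Section RecursiveStepsizes.
Variable alpha : nat -> R.
Hypothesis alpha1 : alpha 1%N = 1.
Hypothesis alpha_rec : forall k, (2 <= k)%N ->
  0 < alpha k /\ alpha k ^+ 2 = (1 - alpha k) * gam alpha k.-1.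

Lemma gam_rec_sqr k : (1 <= k)%N -> gam alpha k = alpha k ^+ 2 /\ 0 < alpha k <= 1.
Proof.
elim: k => [//|[_ _|k IH _]]; first by rewrite /= alpha1 expr1n ltr01 lexx.
have [gamE /andP[b_gt0 _]] := IH isT.
have [a_gt0 recE] := alpha_rec (k := k.+2) isT.
have sqr_rec : alpha k.+2 ^+ 2 = (1 - alpha k.+2) * alpha k.+1 ^+ 2 by rewrite -gamE.
split; first exact: esym recE.
by rewrite a_gt0 /=; nra.
Qed.

Lemma inv_alpha_rec_bounds k : (1 <= k)%N -> (k%:R + 1) / 2 <= (alpha k)^-1 <= k%:R.
Proof.
elim: k => [//|[_ _|k IH _]]; first by rewrite alpha1 invr1; lra.
have [gamE /andP[b_gt0 _]] := gam_rec_sqr (k := k.+1) isT.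
have [_ /andP[a_gt0 _]] := gam_rec_sqr (k := k.+2) isT.
have [_ recE] := alpha_rec (k := k.+2) isT.
have {}recE : alpha k.+2 ^+ 2 = (1 - alpha k.+2) * alpha k.+1 ^+ 2 by rewrite -gamE.
have step : (alpha k.+2)^-1 ^+ 2 - (alpha k.+2)^-1 = (alpha k.+1)^-1 ^+ 2.
  apply: (mulIf (expf_neq0 2 (lt0r_neq0 a_gt0))); rewrite {2}recE.
  by field; rewrite !gt_eqF.
rewrite -invr_gt0 in a_gt0; rewrite -invr_gt0 in b_gt0.
have /andP[t_lo t_hi] := sqr_sub_eq_sqr_bounds b_gt0 a_gt0 step.
have /andP[u_lo u_hi] := IH isT.
by rewrite -[k.+2%:R]natr1; apply/andP; split; lra.
Qed.

Lemma gam_rec_le k : (1 <= k)%N -> 0 <= gam alpha k <= 4 / (k%:R * (k%:R + 1)).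
Proof.
move=> k1; have [-> /andP[a_gt0 _]] := gam_rec_sqr k1.
have /andP[inv_ge _] := inv_alpha_rec_bounds k1.
have K1 : 1 <= k%:R :> R by rewrite ler1n.
have a_le : alpha k <= 2 / (k%:R + 1).
  rewrite -[alpha k]invrK -invf_div lef_pV2 ?posrE ?invr_gt0 ?divr_gt0 //; lra.
rewrite exprn_ge0 ?(ltW a_gt0) //=.
apply: (le_trans (lerXn2r 2 _ _ a_le)); rewrite ?nnegrE ?(ltW a_gt0) ?divr_ge0 //.
have -> : 4 / (k%:R * (k%:R + 1)) = (2 / (k%:R + 1)) ^+ 2 * ((k%:R + 1) / k%:R) :> R.
  by field; lra.
by rewrite ler_peMr ?exprn_ge0 ?divr_ge0 ?ler_pdivlMr; lra.
Qed.

Lemma Gam_entry_rec_le rho i : 0 <= rho -> rho <= 1 -> (1 <= i)%N ->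
  0 <= Gam_entry alpha rho i <= i%:R `^ (1 - rho).
Proof.
move=> rho0 rho1 i1.
have [gamE /andP[a_gt0 _]] := gam_rec_sqr i1.
have /andP[_ inv_le] := inv_alpha_rec_bounds i1.
rewrite /Gam_entry gamE.
set a := alpha i in a_gt0 inv_le *; set t := a^-1 in inv_le *.
have t_gt0 : 0 < t by rewrite invr_gt0.
have [a_ge0 t_ge0] := (ltW a_gt0, ltW t_gt0).
have a_pow : a `^ rho = (t `^ rho)^-1.
  apply: (mulIf (lt0r_neq0 (powR_gt0 rho t_gt0))).
  by rewrite -powRM // mulfV ?lt0r_neq0 // powR1 mulVf ?lt0r_neq0 ?powR_gt0.
have -> : a ^- 2 * a `^ (1 + rho) = t `^ (1 - rho).
  rewrite powRD ?powRr1 //; last by apply/implyP => _; apply: lt0r_neq0.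
  rewrite powRB ?powRr1 //; last by apply/implyP => _; apply: lt0r_neq0.
  by rewrite a_pow /t; field; rewrite ?lt0r_neq0 ?powR_gt0.
by rewrite powR_ge0 ge0_ler_powR ?nnegrE //; lra.
Qed.

End RecursiveStepsizes.
End RateBounds.

Theorem proposition3p4 (R : realType) (rho : R) (hrho0 : 0 <= rho) (hrho1 : rho <= 1) :
  (* (a) *)
  (forall alpha : nat -> R,
     (forall k : nat, (1 <= k)%N -> alpha k = 2 / (k%:R + 1)) ->
     (forall k : nat, (1 <= k)%N -> 0 < alpha k <= 1) /\
     alpha 1%N = 1 /\
     (forall k : nat, (1 <= k)%N ->
        gam alpha k * Gam_norm alpha rho k <=
        (2 `^ (1 + rho) * 3 `^ (- ((1 - rho) / 2))) * k%:R `^ (- ((1 + 3 * rho) / 2))))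
  /\
  (* (b) *)
  (forall alpha : nat -> R,
     alpha 1%N = 1 ->
     (forall k : nat, (2 <= k)%N ->
        0 < alpha k /\ alpha k ^+ 2 = (1 - alpha k) * gam alpha k.-1) ->
     (forall k : nat, (1 <= k)%N -> 0 < alpha k <= 1) /\
     alpha 1%N = 1 /\
     (forall k : nat, (1 <= k)%N ->
        gam alpha k * Gam_norm alpha rho k <=
        (4 / 3 `^ ((1 - rho) / 2)) * k%:R `^ (- ((1 + 3 * rho) / 2)))).
Proof.
split=> [alpha alphaE | alpha alpha1 alpha_rec].
  split; first exact: harmonic_alpha_gt0_le1.
  split=> [|k k1]; first by rewrite alphaE //; field.
  rewrite powRD ?powRr1 //; last by apply/implyP => _; rewrite pnatr_eq0.
  apply: gam_Gam_norm_le => //.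
    by rewrite gam_harmonic // lexx andbT divr_ge0 // mulr_ge0.
  by move=> i /andP[i1 _]; apply: Gam_entry_harmonic_le.
split=> [k k1|]; first exact: (proj2 (gam_rec_sqr alpha1 alpha_rec k1)).
split=> // k k1; rewrite -[4]mulr1 -powRN.
apply: gam_Gam_norm_le => //; first exact: gam_rec_le.
by move=> i /andP[i1 _]; rewrite mul1r; apply: Gam_entry_rec_le.
Qed.
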